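(* Let $B>1$, $p>0$, $f_p(x)=x^{2p}e^{-x^2}$, $n\in\mathbb{R}$. For $a>0$ with $2ap+n>-1$, as $j\to\infty$, $$\sum_{l\ge1}f_p^a\Big(\frac{l}{B^j}\Big)l^n=\frac{B^{(n+1)j}}{2a^{ap+\frac{n+1}{2}}}\Gamma\Big(ap+\frac{n+1}{2}\Big)+o\big(B^{(n+1)j}\big).$$ Moreover, for $a_1,a_2>0$ with $2(a_1+a_2)p+n>-1$ and fixed $\Delta j\in\mathbb{Z}$, as $j\to\infty$, $$\sum_{l\ge1}f_p^{a_1}\Big(\frac{l}{B^j}\Big)f_p^{a_2}\Big(\frac{l}{B^{j+\Delta j}}\Big)l^n=\frac{B^{(n+1)j}\,\tau_{p,a_1,a_2}(\Delta j)}{2(a_1+a_2)^{(a_1+a_2)p+\frac{n+1}{2}}}\Gamma\Big((a_1+a_2)p+\frac{n+1}{2}\Big)+o\big(B^{(n+1)j}\big),$$ where $$\tau_{p,a_1,a_2}(\Delta j)=\Big(\frac{a_1B^{\Delta j}+a_2B^{-\Delta j}}{a_1+a_2}\Big)^{-((a_1+a_2)p+\frac{n+1}{2})}B^{\Delta j((a_1-a_2)p+\frac{n+1}{2})}.$$ *)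

From Stdlib Require Import Reals.
From Coquelicot Require Import Coquelicot.
Open Scope R_scope.

Definition Gamma (s : R) : R :=
  RInt_gen (fun t => Rpower t (s - 1) * exp (- t))
           (at_right 0) (Rbar_locally p_infty).

(* f_p(x) = x^(2p) e^(-x^2); only ever evaluated at x > 0 below. *)
Definition fp (p x : R) : R := Rpower x (2 * p) * exp (- (x ^ 2)).

Definition fpa (p a x : R) : R := Rpower (fp p x) a.

Definition tau (B n p a1 a2 : R) (dj : Z) : R :=
  Rpower ((a1 * Rpower B (IZR dj) + a2 * Rpower B (- IZR dj)) / (a1 + a2))
         (- ((a1 + a2) * p + (n + 1) / 2))
  * Rpower B (IZR dj * ((a1 - a2) * p + (n + 1) / 2)).

(* Writing [e = B^-j] and [l^n = B^(n j) (l e)^n], each sum is [B^(n j)] times a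
   constant times the Riemann sum [sum_(k >= 1) h (k e)] of
   [h x = x^(2 s - 1) exp (- c x^2)], with [s = a p + (n + 1) / 2] and [c = a]
   in the first case, and [s = (a1 + a2) p + (n + 1) / 2],
   [c = a1 + a2 B^(-2 dj)] and the constant [B^(-2 a2 p dj)] in the second.
   Since [h] is nonnegative, continuous and unimodal on ]0, +oo[, [e] times this
   Riemann sum is within [e (max h + h e)] of [int_e^oo h], hence tends to
   [int_0^oo h = Gamma s / (2 c^s)] (substitute [t = c x^2]); [tau] is exactly
   this constant renormalised by [a1 + a2]. *)

From Stdlib Require Import Reals Lra Lia Classical.
From Coquelicot Require Import Coquelicot.
Open Scope R_scope.

(* [Rpower x a = exp (a ln x)] is positive for every [x], including [x <= 0]. *)
Lemma Rpower_gt0 x a : 0 < Rpower x a.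
Proof. apply exp_pos. Qed.

Lemma exp_le_exp x y : x <= y -> exp x <= exp y.
Proof.
  intros [Hxy| ->]; [left; apply exp_increasing|]; auto with real.
Qed.

Lemma continuous_Rpower_l a x : 0 < x -> continuous (fun t => Rpower t a) x.
Proof.
  intros Hx; apply (@ex_derive_continuous R_AbsRing R_NormedModule).
  unfold Rpower; auto_derive; exact Hx.
Qed.

Lemma Rpower_succ y a : 0 < y -> y * Rpower y (a - 1) = Rpower y a.
Proof.
  intros Hy; rewrite <- (Rpower_1 y Hy) at 1; rewrite <- Rpower_plus; f_equal; ring.
Qed.

Lemma Rpower_div_scale l E n : 0 < l -> 0 < E -> Rpower l n = Rpower E n * Rpower (l / E) n.
Proof.
  intros Hl HE; rewrite Rpower_mult_distr by (try apply Rdiv_lt_0_compat; auto).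
  f_equal; field; lra.
Qed.

Lemma is_lim_seq_0_eventually (u : nat -> R) (c : R) : is_lim_seq u 0 -> 0 < c ->
  eventually (fun n => Rabs (u n) < c).
Proof.
  intros Hu Hc; apply is_lim_seq_spec in Hu.
  destruct (Hu (mkposreal c Hc)) as [N HN]; exists N; intros n Hn.
  rewrite <- (Rminus_0_r (u n)); apply HN, Hn.
Qed.

Lemma is_lim_seq_Rpower_0 (eps : nat -> R) b : (forall j, 0 < eps j) ->
  is_lim_seq eps 0 -> 0 < b -> is_lim_seq (fun j => Rpower (eps j) b) 0.
Proof.
  intros Heps Heps0 Hb; apply is_lim_seq_spec; intro d.
  assert (Hd := cond_pos d).
  destruct (is_lim_seq_0_eventually eps _ Heps0 (Rpower_gt0 d (/ b))) as [N HN].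
  exists N; intros j Hj; specialize (HN j Hj).
  rewrite Rabs_pos_eq in HN by (left; apply Heps).
  rewrite Rminus_0_r, Rabs_pos_eq by (left; apply Rpower_gt0).
  assert (K := Rlt_Rpower_l (eps j) (Rpower d (/ b)) b Hb (conj (Heps j) HN)).
  rewrite Rpower_mult, Rinv_l, Rpower_1 in K by lra; exact K.
Qed.

Lemma is_lim_seq_inv_Rpower_nat B : 1 < B -> is_lim_seq (fun j => / Rpower B (INR j)) 0.
Proof.
  intros HB; apply is_lim_seq_ext with (fun j => (/ B) ^ j).
  - intro j; rewrite Rpower_pow, pow_inv by lra; reflexivity.
  - apply is_lim_seq_geom; rewrite Rabs_pos_eq by (left; apply Rinv_0_lt_compat; lra).
    apply Rmult_lt_reg_l with B; [lra|]; rewrite Rinv_r; lra.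
Qed.

(** * Integrals over the positive half-line *)

Section PositiveHalfLine.

Variable f : R -> R.
Hypothesis f_cont : forall x, 0 < x -> continuous f x.

Lemma ex_RInt_pos u v : 0 < u -> 0 < v -> ex_RInt f u v.
Proof.
  intros Hu Hv; apply (@ex_RInt_continuous R_CompleteNormedModule).
  intros z [Hz _]; apply f_cont.
  apply Rlt_le_trans with (Rmin u v); [apply Rmin_case|]; assumption.
Qed.

Lemma RInt_Chasles_pos u v w : 0 < u -> 0 < v -> 0 < w ->
  RInt f u v + RInt f v w = RInt f u w.
Proof.
  intros Hu Hv Hw; rewrite <- (RInt_Chasles f u v w); try apply ex_RInt_pos; auto.
Qed.

Lemma RInt_cell_bounds x e lo hi : 0 < x -> 0 < e ->
  (forall y, x < y < x + e -> lo <= f y <= hi) ->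
  e * lo <= RInt f x (x + e) <= e * hi.
Proof.
  intros Hx He Hb.
  assert (Hf := ex_RInt_pos x (x + e) Hx ltac:(lra)).
  replace (e * lo) with (RInt (fun _ => lo) x (x + e))
    by (rewrite RInt_const; simpl; unfold scal; simpl; unfold mult; simpl; ring).
  replace (e * hi) with (RInt (fun _ => hi) x (x + e))
    by (rewrite RInt_const; simpl; unfold scal; simpl; unfold mult; simpl; ring).
  split; apply RInt_le; try apply ex_RInt_const; auto; try lra;
    intros y Hy; apply Hb, Hy.
Qed.

Hypothesis f_ge0 : forall x, 0 <= f x.

Lemma RInt_pos_ge0 u v : 0 < u -> u <= v -> 0 <= RInt f u v.
Proof. intros Hu Huv; apply RInt_ge_0; auto; apply ex_RInt_pos; lra. Qed.

Lemma RInt_pos_le_widen u v u' v' : 0 < u' -> u' <= u -> u <= v -> v <= v' ->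
  RInt f u v <= RInt f u' v'.
Proof.
  intros Hu' Hu Huv Hv.
  rewrite <- (RInt_Chasles_pos u' u v') by lra.
  rewrite <- (RInt_Chasles_pos u v v') by lra.
  assert (0 <= RInt f u' u) by (apply RInt_pos_ge0; lra).
  assert (0 <= RInt f v v') by (apply RInt_pos_ge0; lra).
  lra.
Qed.

End PositiveHalfLine.

Definition is_RInt_0_infty (f : R -> R) (I : R) : Prop :=
  (forall u v, 0 < u -> u <= v -> RInt f u v <= I) /\
  (forall d, 0 < d -> exists eta, 0 < eta /\ exists X, forall u v,
     0 < u -> u < eta -> X < v -> I - d < RInt f u v).

Section ImproperIntegral.

Variable f : R -> R.
Hypothesis f_cont : forall x, 0 < x -> continuous f x.
Hypothesis f_ge0 : forall x, 0 <= f x.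

Lemma is_RInt_0_infty_sup M :
  (forall u v, 0 < u -> u <= v -> RInt f u v <= M) -> exists I, is_RInt_0_infty f I.
Proof.
  intros HM.
  set (E := fun y => exists u v, 0 < u /\ u <= v /\ y = RInt f u v).
  destruct (completeness E) as [I [HI_ub HI_lub]].
  { exists M; intros y (u & v & Hu & Huv & ->); apply HM; auto. }
  { exists (RInt f 1 1), 1, 1; repeat split; lra. }
  exists I; split.
  - intros u v Hu Huv; apply HI_ub; exists u, v; auto.
  - intros d Hd.
    assert (Happrox : exists y, E y /\ I - d < y).
    { apply NNPP; intro Hn.
      enough (I <= I - d) by lra.
      apply HI_lub; intros y Ey; apply Rnot_lt_le; intro Hy; apply Hn.
      exists y; auto. }
    destruct Happrox as (y & (u0 & v0 & Hu0 & Huv0 & ->) & Hy).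
    exists u0; split; auto; exists v0; intros u v Hu Hu0' Hv.
    assert (RInt f u0 v0 <= RInt f u v)
      by (apply RInt_pos_le_widen; auto; lra).
    lra.
Qed.

Lemma is_RInt_0_infty_gen I : is_RInt_0_infty f I ->
  is_RInt_gen f (at_right 0) (Rbar_locally p_infty) I.
Proof.
  intros [HI_ub HI_approx] P [eps HP].
  destruct (HI_approx eps (cond_pos eps)) as (eta & Heta & X & HX).
  apply Filter_prod with (fun u => 0 < u < eta) (fun v => Rmax X eta < v).
  - exists (mkposreal eta Heta); intros y Hy Hy0.
    change (Rabs (y - 0) < eta) in Hy.
    rewrite Rminus_0_r, Rabs_pos_eq in Hy by lra; lra.
  - exists (Rmax X eta); auto.
  - intros u v Hu Hv.
    assert (X < v /\ eta < v) as [HXv Hetav]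
      by (split; eapply Rle_lt_trans; eauto; [apply Rmax_l|apply Rmax_r]).
    exists (RInt f u v); split.
    + apply (@RInt_correct R_CompleteNormedModule), ex_RInt_pos; auto; lra.
    + apply HP; change (Rabs (RInt f u v - I) < eps).
      assert (I - eps < RInt f u v) by (apply HX; lra).
      assert (RInt f u v <= I) by (apply HI_ub; lra).
      apply Rabs_def1; lra.
Qed.

End ImproperIntegral.

(** * Riemann sums of unimodal functions *)

Record unimodal (h : R -> R) (m : R) : Prop := {
  unimodal_cont : forall x, 0 < x -> continuous h x;
  unimodal_ge0 : forall x, 0 <= h x;
  unimodal_incr : forall x y, 0 < x -> x <= y -> y <= m -> h x <= h y;
  unimodal_decr : forall x y, 0 < x -> m <= x -> x <= y -> h y <= h x }.

Definition riemann_sum (h : R -> R) (e : R) (N : nat) : R :=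
  sum_n (fun k => h (INR (S k) * e)) N.

Section RiemannSums.

Variables (h : R -> R) (m : R).
Hypothesis h_unimodal : unimodal h m.

Let h_cont := unimodal_cont h m h_unimodal.
Let h_ge0 := unimodal_ge0 h m h_unimodal.
Let h_incr := unimodal_incr h m h_unimodal.
Let h_decr := unimodal_decr h m h_unimodal.

Lemma RInt_cell_incr x e : 0 < x -> 0 < e -> x + e <= m ->
  e * h x <= RInt h x (x + e) <= e * h (x + e).
Proof.
  intros Hx He Hm; apply RInt_cell_bounds; auto.
  intros y Hy; split; apply h_incr; auto; lra.
Qed.

Lemma RInt_cell_decr x e : 0 < x -> 0 < e -> m <= x ->
  e * h (x + e) <= RInt h x (x + e) <= e * h x.
Proof.
  intros Hx He Hm; apply RInt_cell_bounds; auto.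
  intros y Hy; split; apply h_decr; auto; lra.
Qed.

Lemma unimodal_le_tail e y : 0 < e -> e <= y -> h y <= h m + h e.
Proof.
  intros He Hy; assert (0 <= h m) by apply h_ge0; assert (0 <= h e) by apply h_ge0.
  destruct (Rle_or_lt y m) as [Hym|Hmy].
  - assert (h y <= h m) by (apply h_incr; lra); lra.
  - destruct (Rle_or_lt m e) as [Hme|Hem].
    + assert (h y <= h e) by (apply h_decr; lra); lra.
    + assert (h y <= h m) by (apply h_decr; lra); lra.
Qed.

Section Mesh.

Variables (e P : R).
Hypothesis e_gt0 : 0 < e.
Hypothesis h_le_P : forall y, e <= y -> h y <= P.

Let node_gt0 N : 0 < INR (S N) * e.
Proof. apply Rmult_lt_0_compat; auto; apply lt_0_INR; lia. Qed.

Let node_ge N : e <= INR (S N) * e.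
Proof.
  rewrite <- (Rmult_1_l e) at 1; apply Rmult_le_compat_r; [lra|].
  apply (le_INR 1); lia.
Qed.

Let RInt_cell_le x : e <= x -> 0 <= RInt h x (x + e) <= e * P.
Proof.
  intros Hx; replace 0 with (e * 0) by ring.
  apply RInt_cell_bounds; auto; try lra.
  intros y Hy; split; [apply h_ge0|apply h_le_P; lra].
Qed.

(* Compare each node with the cell to its left while [h] increases and with
   the cell to its right once it decreases; the cell straddling the mode
   costs at most [e * P], once on each side. *)
Lemma riemann_sum_partial N (x := INR (S N) * e) :
  (x <= m -> RInt h e x <= e * riemann_sum h e N <= RInt h e x + e * h x) /\
  (m < x -> RInt h e (x + e) - e * P <= e * riemann_sum h e N <= RInt h e x + 2 * e * P).
Proof.
  assert (P_ge0 : 0 <= P) by (apply Rle_trans with (h e); [apply h_ge0|apply h_le_P; lra]).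
  induction N as [|N IH].
  - unfold riemann_sum, x; rewrite sum_O; simpl (INR 1); rewrite Rmult_1_l.
    rewrite RInt_point; unfold zero; simpl.
    assert (h e <= P) by (apply h_le_P; lra).
    split; intro Hm.
    + split; [apply Rmult_le_pos|]; auto; lra.
    + destruct (RInt_cell_decr e e e_gt0 e_gt0 (Rlt_le _ _ Hm)); nra.
  - set (x0 := INR (S N) * e) in IH.
    assert (Hx : x = x0 + e) by (unfold x, x0; rewrite S_INR; ring).
    assert (Hsum : e * riemann_sum h e (S N) = e * riemann_sum h e N + e * h x).
    { unfold riemann_sum; rewrite sum_Sn; change (plus ?a ?b) with (a + b).
      unfold x; ring. }
    rewrite Hsum; destruct IH as [IH_incr IH_decr].
    assert (Hx0 := node_gt0 N); assert (Hex0 := node_ge N); fold x0 in Hx0, Hex0.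
    assert (Hcut := RInt_Chasles_pos h h_cont e x0 x e_gt0 Hx0 ltac:(lra)).
    split; intro Hm.
    + destruct (IH_incr ltac:(lra)).
      destruct (RInt_cell_incr x0 e Hx0 e_gt0 ltac:(lra)); rewrite <- Hx in *; lra.
    + assert (Hcut' := RInt_Chasles_pos h h_cont e x (x + e) e_gt0 ltac:(lra) ltac:(lra)).
      assert (h x <= P) by (apply h_le_P; lra).
      destruct (RInt_cell_decr x e ltac:(lra) e_gt0 ltac:(lra)).
      destruct (Rle_or_lt x0 m) as [Hm0|Hm0].
      * destruct (IH_incr Hm0); destruct (RInt_cell_le x0 Hex0); rewrite <- Hx in *.
        assert (h x0 <= P) by (apply h_le_P; lra); nra.
      * destruct (IH_decr Hm0); destruct (RInt_cell_decr x0 e Hx0 e_gt0 ltac:(lra)).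
        rewrite <- Hx in *; lra.
Qed.

Lemma riemann_sum_bounds I N : (forall u v, 0 < u -> u <= v -> RInt h u v <= I) ->
  RInt h e (INR (S N) * e + e) - e * P <= e * riemann_sum h e N <= I + 2 * e * P.
Proof.
  intros HI; assert (Hx := node_ge N); set (x := INR (S N) * e) in *.
  assert (P_ge0 : 0 <= P) by (apply Rle_trans with (h e); [apply h_ge0|apply h_le_P; lra]).
  destruct (riemann_sum_partial N) as [Hincr Hdecr]; fold x in Hincr, Hdecr.
  assert (RInt h e x <= I) by (apply HI; lra).
  destruct (Rle_or_lt x m) as [Hm|Hm].
  - destruct (Hincr Hm).
    assert (h x <= P) by (apply h_le_P; lra).
    rewrite <- (RInt_Chasles_pos h h_cont e x (x + e)) by lra.
    destruct (RInt_cell_le x Hx); nra.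
  - destruct (Hdecr Hm); nra.
Qed.

Lemma riemann_series_bounds I : (forall u v, 0 < u -> u <= v -> RInt h u v <= I) ->
  let a := fun k => h (INR (S k) * e) in
  ex_series a /\ e * Series a <= I + 2 * e * P /\
  forall N, RInt h e (INR (S N) * e + e) - e * P <= e * Series a.
Proof.
  intros HI a; assert (Hb := fun N => riemann_sum_bounds I N HI).
  assert (Hincr : forall N, sum_n a N <= sum_n a (S N)).
  { intro N; rewrite sum_Sn; change (plus ?x ?y) with (x + y).
    assert (0 <= a (S N)) by apply h_ge0; lra. }
  destruct (ex_finite_lim_seq_incr (sum_n a) ((I + 2 * e * P) / e) Hincr) as [l Hl].
  { intro N; destruct (Hb N) as [_ Hub]; unfold riemann_sum in Hub; fold a in Hub.
    apply Rmult_le_reg_l with e; auto; field_simplify; lra. }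
  assert (Hs : is_series a l) by exact Hl.
  rewrite (is_series_unique a l Hs); split; [exists l; exact Hs|split].
  - assert (K := is_lim_seq_le (fun N => e * sum_n a N) (fun _ => I + 2 * e * P)
      (e * l) (I + 2 * e * P)); simpl in K; apply K.
    + intro N; apply (Hb N).
    + apply (is_lim_seq_scal_l _ e l Hl).
    + apply is_lim_seq_const.
  - intro N; destruct (Hb N) as [Hlb _]; unfold riemann_sum in Hlb; fold a in Hlb.
    assert (sum_n a N <= l) by apply (is_lim_seq_incr_compare _ l Hl Hincr); nra.
Qed.

End Mesh.

(* The error terms [e * (h m + h e)] of [riemann_series_bounds] vanish with
   the mesh, provided [e * h e] does. *)
Lemma riemann_series_lim I : is_RInt_0_infty h I ->
  forall eps : nat -> R, (forall j, 0 < eps j) -> is_lim_seq eps 0 ->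
  is_lim_seq (fun j => eps j * h (eps j)) 0 ->
  is_lim_seq (fun j => eps j * Series (fun k => h (INR (S k) * eps j))) I.
Proof.
  intros [HI_ub HI_approx] eps Heps Heps0 Hh0.
  apply is_lim_seq_spec; intro d; assert (Hd := cond_pos d); set (dd := pos d) in *.
  destruct (HI_approx (dd / 2) ltac:(lra)) as (eta & Heta & X & HX).
  assert (Hhm : is_lim_seq (fun j => eps j * h m) 0).
  { replace (Finite 0) with (Rbar_mult 0 (h m)) by (simpl; f_equal; ring).
    apply is_lim_seq_scal_r, Heps0. }
  destruct (is_lim_seq_0_eventually _ eta Heps0 Heta) as [N1 E1].
  destruct (is_lim_seq_0_eventually _ (dd / 8) Hh0 ltac:(lra)) as [N2 E2].
  destruct (is_lim_seq_0_eventually _ (dd / 8) Hhm ltac:(lra)) as [N3 E3].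
  exists (N1 + N2 + N3)%nat; intros j Hj.
  specialize (E1 j ltac:(lia)); specialize (E2 j ltac:(lia)); specialize (E3 j ltac:(lia)).
  set (e := eps j) in *; assert (He : 0 < e) by apply Heps.
  assert (0 <= h e) by apply h_ge0; assert (0 <= h m) by apply h_ge0.
  rewrite Rabs_pos_eq in E1, E2, E3 by (try apply Rmult_le_pos; lra).
  destruct (riemann_series_bounds e (h m + h e) He (fun y => unimodal_le_tail e y He) I HI_ub)
    as (_ & Hub & Hlb).
  destruct (INR_unbounded (X / e)) as [N HN]; specialize (Hlb N).
  assert (HXN : X < INR (S N) * e + e).
  { rewrite S_INR; replace X with ((X / e) * e) by (field; lra).
    assert ((X / e) * e < INR N * e) by (apply Rmult_lt_compat_r; auto); lra. }
  assert (Happrox := HX e _ He E1 HXN).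
  set (S0 := Series _) in *; apply Rabs_def1; nra.
Qed.

End RiemannSums.

(** * The Gamma integral *)

Definition gamma_integrand (s t : R) : R := Rpower t (s - 1) * exp (- t).

Lemma gamma_integrand_cont s x : 0 < x -> continuous (gamma_integrand s) x.
Proof.
  intros Hx; apply (@ex_derive_continuous R_AbsRing R_NormedModule).
  unfold gamma_integrand, Rpower; auto_derive; exact Hx.
Qed.

Lemma gamma_integrand_ge0 s x : 0 <= gamma_integrand s x.
Proof. apply Rmult_le_pos; left; [apply Rpower_gt0|apply exp_pos]. Qed.

Lemma RInt_gamma_integrand_head_le s u : 0 < s -> 0 < u -> u <= 1 ->
  RInt (gamma_integrand s) u 1 <= / s.
Proof.
  intros Hs Hu Hu1.
  assert (Hpos : forall x, Rmin u 1 <= x <= Rmax u 1 -> 0 < x)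
    by (intros x [Hx _]; eapply Rlt_le_trans; [|exact Hx]; apply Rmin_case; lra).
  assert (Hprim : is_RInt (fun t => Rpower t (s - 1)) u 1
     (minus (/ s * Rpower 1 s) (/ s * Rpower u s))).
  { apply (@is_RInt_derive R_CompleteNormedModule (fun t => / s * Rpower t s)).
    - intros x Hx; specialize (Hpos x Hx).
      assert (D := is_derive_scal _ x (/ s) _
                     (proj2 (is_derive_Reals _ _ _) (derivable_pt_lim_power x s Hpos))).
      replace (Rpower x (s - 1)) with (/ s * (s * Rpower x (s - 1))) by (field; lra).
      exact D.
    - intros x Hx; apply continuous_Rpower_l, Hpos, Hx. }
  apply Rle_trans with (RInt (fun t => Rpower t (s - 1)) u 1).
  - apply RInt_le; auto; try (apply ex_RInt_pos; auto; try lra).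
    + apply gamma_integrand_cont.
    + intros; apply continuous_Rpower_l; auto.
    + intros x Hx; unfold gamma_integrand.
      assert (0 < Rpower x (s - 1)) by apply Rpower_gt0.
      assert (exp (- x) <= exp 0) by (apply exp_le_exp; lra).
      rewrite exp_0 in *; nra.
  - rewrite (is_RInt_unique _ _ _ _ Hprim); unfold minus, plus, opp; simpl.
    unfold Rpower at 1; rewrite ln_1, Rmult_0_r, exp_0.
    assert (0 < Rpower u s) by apply Rpower_gt0.
    assert (0 < / s) by (apply Rinv_0_lt_compat; lra); nra.
Qed.

(* From [ln (t / A) <= t / A - 1] with [A = 2 (|s - 1| + 1)]. *)
Lemma Rpower_le_exp_half s : exists C, 0 < C /\
  forall t, 1 <= t -> Rpower t (s - 1) <= C * exp (t / 2).
Proof.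
  set (A := 2 * (Rabs (s - 1) + 1)).
  assert (Habs := Rabs_pos (s - 1)); assert (HA : 0 < A) by (unfold A; lra).
  exists (exp (Rabs (s - 1) * Rabs (ln A - 1))); split; [apply exp_pos|].
  intros t Ht; unfold Rpower; rewrite <- exp_plus; apply exp_le_exp.
  assert (Hln := exp_ineq1_le (ln (t / A))).
  rewrite exp_ln, ln_div in Hln by (try apply Rdiv_lt_0_compat; lra).
  assert (0 <= ln t) by (rewrite <- ln_1; apply ln_le; lra).
  assert (Rabs (s - 1) * (t / A) <= t / 2).
  { unfold Rdiv; apply Rmult_le_reg_r with A; auto.
    replace (Rabs (s - 1) * (t * / A) * A) with (Rabs (s - 1) * t) by (field; lra).
    unfold A; nra. }
  assert (Hs := Rle_abs (s - 1)); assert (HlnA := Rle_abs (ln A - 1)); nra.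
Qed.

Lemma RInt_gamma_integrand_tail_bounded s :
  exists M, forall v, 1 <= v -> RInt (gamma_integrand s) 1 v <= M.
Proof.
  destruct (Rpower_le_exp_half s) as (C & HC & HCb).
  assert (Hcont : forall x, continuous (fun t => exp (- t / 2)) x)
    by (intro x; apply (@ex_derive_continuous R_AbsRing R_NormedModule); auto_derive; auto).
  assert (Hprim : forall v, is_RInt (fun t => exp (- t / 2)) 1 v
     (minus (-2 * exp (- v / 2)) (-2 * exp (- (1) / 2)))).
  { intro v; apply (@is_RInt_derive R_CompleteNormedModule (fun t => -2 * exp (- t / 2))).
    - intros x _; auto_derive; auto.
      replace (- x * / 2) with (- x / 2) by field.
      change RinvImpl.Rinv with Rinv; field.
    - intros x _; apply Hcont. }
  exists (2 * C); intros v Hv.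
  apply Rle_trans with (C * RInt (fun t => exp (- t / 2)) 1 v).
  - rewrite <- (RInt_scal (V := R_CompleteNormedModule))
      by (eexists; apply Hprim).
    apply RInt_le; [lra| | |].
    + apply ex_RInt_pos; [apply gamma_integrand_cont|lra|lra].
    + exact (ex_RInt_scal (V := R_CompleteNormedModule) _ 1 v C
               (ex_RInt_pos _ (fun x _ => Hcont x) 1 v ltac:(lra) ltac:(lra))).
    + intros x Hx; unfold gamma_integrand, scal; simpl; unfold mult; simpl.
      assert (K := HCb x ltac:(lra)); assert (0 < exp (- x)) by apply exp_pos.
      replace (exp (- x / 2)) with (exp (x / 2) * exp (- x))
        by (rewrite <- exp_plus; f_equal; field); nra.
  - rewrite (is_RInt_unique _ _ _ _ (Hprim v)); unfold minus, plus, opp; simpl.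
    assert (0 < exp (- v / 2)) by apply exp_pos.
    assert (0 < exp (- (1) / 2)) by apply exp_pos.
    assert (exp (- (1) / 2) <= exp 0) by (apply exp_le_exp; lra).
    rewrite exp_0 in *; nra.
Qed.

Lemma gamma_integrand_RInt_bounded s : 0 < s ->
  exists M, forall u v, 0 < u -> u <= v -> RInt (gamma_integrand s) u v <= M.
Proof.
  intros Hs; destruct (RInt_gamma_integrand_tail_bounded s) as [M HM].
  exists (/ s + M); intros u v Hu Huv.
  set (u' := Rmin u 1); set (v' := Rmax v 1).
  assert (0 < u' /\ u' <= u /\ u' <= 1) as (Hu'0 & Hu'u & Hu'1)
    by (unfold u'; repeat split; [apply Rmin_case; lra|apply Rmin_l|apply Rmin_r]).
  assert (v <= v' /\ 1 <= v') as [Hvv' Hv'1] by (split; [apply Rmax_l|apply Rmax_r]).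
  assert (Hwiden : RInt (gamma_integrand s) u v <= RInt (gamma_integrand s) u' v')
    by (apply RInt_pos_le_widen; auto; [apply gamma_integrand_cont|apply gamma_integrand_ge0]).
  rewrite <- (RInt_Chasles_pos _ (gamma_integrand_cont s) u' 1 v') in Hwiden by lra.
  assert (RInt (gamma_integrand s) u' 1 <= / s) by (apply RInt_gamma_integrand_head_le; lra).
  assert (RInt (gamma_integrand s) 1 v' <= M) by (apply HM; lra).
  lra.
Qed.

Lemma Gamma_is_RInt_0_infty s : 0 < s -> is_RInt_0_infty (gamma_integrand s) (Gamma s).
Proof.
  intros Hs; destruct (gamma_integrand_RInt_bounded s Hs) as [M HM].
  destruct (is_RInt_0_infty_sup _ (gamma_integrand_cont s) (gamma_integrand_ge0 s) M HM)
    as [I HI].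
  assert (Hgen := is_RInt_0_infty_gen _ (gamma_integrand_cont s) I HI).
  replace (Gamma s) with I; [exact HI|].
  symmetry; exact (@is_RInt_gen_unique R_CompleteNormedModule _ _ _ _ _ _ Hgen).
Qed.

(** * Gaussian moments *)

Definition gauss_power (s c x : R) : R := Rpower x (2 * s - 1) * exp (- (c * x ^ 2)).

(* The maximiser of [gauss_power s c] on ]0, +oo[, or [0] when [2 s <= 1]. *)
Definition gauss_mode (s c : R) : R := sqrt (Rmax (2 * s - 1) 0 / (2 * c)).

Section GaussPower.

Variables s c : R.
Hypothesis c_gt0 : 0 < c.

Let log_gauss_power x := (2 * s - 1) * ln x - c * x ^ 2.

Let gauss_power_exp x : gauss_power s c x = exp (log_gauss_power x).
Proof. unfold gauss_power, log_gauss_power, Rpower; rewrite <- exp_plus; f_equal; ring. Qed.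

Let gauss_mode_sq : 2 * c * gauss_mode s c ^ 2 = Rmax (2 * s - 1) 0.
Proof.
  unfold gauss_mode; rewrite pow2_sqrt by (apply Rdiv_le_0_compat; [apply Rmax_r|lra]).
  field; lra.
Qed.

Let le_gauss_mode t : 0 < t -> t <= gauss_mode s c -> 2 * c * t ^ 2 <= 2 * s - 1.
Proof.
  intros Ht Htm.
  assert (Hsq : t ^ 2 <= gauss_mode s c ^ 2) by (apply pow_incr; lra).
  assert (Hpos : 0 < 2 * c * t ^ 2) by (apply Rmult_lt_0_compat; [lra|apply pow_lt; lra]).
  assert (Hmax : 2 * c * t ^ 2 <= Rmax (2 * s - 1) 0)
    by (rewrite <- gauss_mode_sq; apply Rmult_le_compat_l; lra).
  revert Hmax; apply Rmax_case; lra.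
Qed.

Let gauss_mode_le t : gauss_mode s c <= t -> 2 * s - 1 <= 2 * c * t ^ 2.
Proof.
  intros Hmt; assert (0 <= gauss_mode s c) by apply sqrt_pos.
  assert (Hsq : gauss_mode s c ^ 2 <= t ^ 2) by (apply pow_incr; lra).
  assert (Hmax : Rmax (2 * s - 1) 0 <= 2 * c * t ^ 2)
    by (rewrite <- gauss_mode_sq; apply Rmult_le_compat_l; lra).
  assert (2 * s - 1 <= Rmax (2 * s - 1) 0) by apply Rmax_l; lra.
Qed.

Let log_gauss_power_MVT x y : 0 < x -> x <= y -> exists t, x <= t <= y /\
  log_gauss_power y - log_gauss_power x = (2 * s - 1 - 2 * c * t ^ 2) / t * (y - x).
Proof.
  intros Hx Hxy.
  destruct (MVT_gen log_gauss_power x y (fun t => (2 * s - 1 - 2 * c * t ^ 2) / t))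
    as (t & Ht & Hmvt); rewrite ?Rmin_left, ?Rmax_right in * by lra.
  - intros t Ht; unfold log_gauss_power; auto_derive; [lra|field; lra].
  - intros t Ht; apply continuity_pt_filterlim.
    apply (@ex_derive_continuous R_AbsRing R_NormedModule).
    unfold log_gauss_power; auto_derive; lra.
  - exists t; auto.
Qed.

Lemma gauss_power_unimodal : unimodal (gauss_power s c) (gauss_mode s c).
Proof.
  split.
  - intros x Hx; apply (@ex_derive_continuous R_AbsRing R_NormedModule).
    unfold gauss_power, Rpower; auto_derive; exact Hx.
  - intros x; apply Rmult_le_pos; left; [apply Rpower_gt0|apply exp_pos].
  - intros x y Hx Hxy Hym; rewrite !gauss_power_exp; apply exp_le_exp.
    destruct (log_gauss_power_MVT x y Hx Hxy) as (t & Ht & Hmvt).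
    assert (2 * c * t ^ 2 <= 2 * s - 1) by (apply le_gauss_mode; lra).
    assert (0 <= (2 * s - 1 - 2 * c * t ^ 2) / t) by (apply Rdiv_le_0_compat; lra).
    nra.
  - intros x y Hx Hxm Hxy; rewrite !gauss_power_exp; apply exp_le_exp.
    destruct (log_gauss_power_MVT x y Hx Hxy) as (t & Ht & Hmvt).
    assert (2 * s - 1 <= 2 * c * t ^ 2) by (apply gauss_mode_le; lra).
    assert (0 <= (2 * c * t ^ 2 - (2 * s - 1)) / t) by (apply Rdiv_le_0_compat; lra).
    replace ((2 * s - 1 - 2 * c * t ^ 2) / t) with (- ((2 * c * t ^ 2 - (2 * s - 1)) / t))
      in Hmvt by (field; lra).
    nra.
Qed.

End GaussPower.

(* Substitution [t = c x^2]. *)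
Lemma RInt_gauss_power s c u v : 0 < c -> 0 < u -> 0 < v ->
  RInt (gauss_power s c) u v =
  / (2 * Rpower c s) * RInt (gamma_integrand s) (c * u ^ 2) (c * v ^ 2).
Proof.
  intros Hc Hu Hv.
  assert (Hpos : forall x, Rmin u v <= x <= Rmax u v -> 0 < x)
    by (intros x [Hx _]; eapply Rlt_le_trans; [|exact Hx]; apply Rmin_case; lra).
  assert (Hsubst : is_RInt (fun y => scal (2 * c * y) (gamma_integrand s (c * y ^ 2))) u v
                     (RInt (gamma_integrand s) (c * u ^ 2) (c * v ^ 2))).
  { apply (@is_RInt_comp R_CompleteNormedModule _ (fun x => c * x ^ 2) (fun x => 2 * c * x)).
    - intros x Hx; apply gamma_integrand_cont.
      specialize (Hpos x Hx); apply Rmult_lt_0_compat; [lra|apply pow_lt; lra].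
    - intros x Hx; split.
      + auto_derive; auto; ring.
      + apply (@ex_derive_continuous R_AbsRing R_NormedModule); auto_derive; auto. }
  apply is_RInt_unique; refine (is_RInt_ext _ _ u v _ _ (is_RInt_scal _ u v _ _ Hsubst)).
  intros y Hy; assert (Hy0 : 0 < y) by (apply Hpos; lra).
  unfold gamma_integrand, gauss_power.
  assert (Hcy : Rpower (c * y ^ 2) (s - 1) = Rpower c (s - 1) * Rpower y (2 * s - 1 - 1)).
  { rewrite <- Rpower_mult_distr by (try apply pow_lt; lra).
    f_equal; rewrite <- (Rpower_pow 2 y Hy0), Rpower_mult; f_equal; simpl; ring. }
  rewrite Hcy, <- (Rpower_succ c s Hc), <- (Rpower_succ y (2 * s - 1) Hy0).
  assert (0 < Rpower c (s - 1)) by apply Rpower_gt0.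
  unfold scal; simpl; unfold mult; simpl; change RinvImpl.Rinv with Rinv.
  field; lra.
Qed.

Lemma gauss_power_is_RInt_0_infty s c : 0 < s -> 0 < c ->
  is_RInt_0_infty (gauss_power s c) (Gamma s / (2 * Rpower c s)).
Proof.
  intros Hs Hc; destruct (Gamma_is_RInt_0_infty s Hs) as [HG_ub HG_approx].
  set (k := / (2 * Rpower c s)).
  assert (Hk : 0 < k) by (apply Rinv_0_lt_compat; assert (0 < Rpower c s) by apply Rpower_gt0; lra).
  replace (Gamma s / (2 * Rpower c s)) with (k * Gamma s) by (unfold k, Rdiv; ring).
  assert (Hsq : forall u, 0 < u -> 0 < c * u ^ 2)
    by (intros u Hu; apply Rmult_lt_0_compat; [lra|apply pow_lt; lra]).
  split.
  - intros u v Hu Huv; rewrite RInt_gauss_power by lra.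
    apply Rmult_le_compat_l; [lra|]; apply HG_ub; auto.
    apply Rmult_le_compat_l; [lra|]; apply pow_incr; lra.
  - intros d Hd; destruct (HG_approx (d / k) ltac:(apply Rdiv_lt_0_compat; lra))
      as (eta & Heta & X & HX).
    exists (sqrt (eta / c)); split; [apply sqrt_lt_R0, Rdiv_lt_0_compat; lra|].
    exists (sqrt (Rabs X / c)); intros u v Hu Hueta Hv.
    assert (Hv0 : 0 < v) by (eapply Rle_lt_trans; [apply sqrt_pos|exact Hv]).
    rewrite RInt_gauss_power by lra.
    assert (c * u ^ 2 < eta).
    { assert (0 <= sqrt (eta / c)) by apply sqrt_pos.
      assert (u ^ 2 < eta / c)
        by (rewrite <- (pow2_sqrt (eta / c)) by (apply Rdiv_le_0_compat; lra); simpl; nra).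
      replace eta with (c * (eta / c)) by (field; lra); apply Rmult_lt_compat_l; lra. }
    assert (X < c * v ^ 2).
    { assert (0 <= sqrt (Rabs X / c)) by apply sqrt_pos.
      assert (Rabs X / c < v ^ 2)
        by (rewrite <- (pow2_sqrt (Rabs X / c)) by (apply Rdiv_le_0_compat;
              [apply Rabs_pos|lra]); simpl; nra).
      apply Rle_lt_trans with (Rabs X); [apply Rle_abs|].
      replace (Rabs X) with (c * (Rabs X / c)) by (field; lra).
      apply Rmult_lt_compat_l; lra. }
    assert (k * (Gamma s - d / k) < k * RInt (gamma_integrand s) (c * u ^ 2) (c * v ^ 2))
      by (apply Rmult_lt_compat_l; auto).
    replace (k * (Gamma s - d / k)) with (k * Gamma s - d) in * by (field; lra); auto.
Qed.

Lemma ex_series_gauss_power s c e : 0 < s -> 0 < c -> 0 < e ->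
  ex_series (fun k => gauss_power s c (INR (S k) * e)).
Proof.
  intros Hs Hc He.
  destruct (gauss_power_is_RInt_0_infty s c Hs Hc) as [HI_ub _].
  assert (Hh := gauss_power_unimodal s c Hc).
  exact (proj1 (riemann_series_bounds _ _ Hh e _ He
                  (fun y => unimodal_le_tail _ _ Hh e y He) _ HI_ub)).
Qed.

(* [e * gauss_power s c e <= e ^ (2 s)]. *)
Lemma is_lim_seq_mesh_gauss_power s c (eps : nat -> R) : 0 < s -> 0 < c ->
  (forall j, 0 < eps j) -> is_lim_seq eps 0 ->
  is_lim_seq (fun j => eps j * gauss_power s c (eps j)) 0.
Proof.
  intros Hs Hc Heps Heps0.
  apply is_lim_seq_le_le with (fun _ => 0) (fun j => Rpower (eps j) (2 * s));
    [|apply is_lim_seq_const|apply is_lim_seq_Rpower_0; auto; lra].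
  intro j; assert (He := Heps j); unfold gauss_power.
  assert (0 < Rpower (eps j) (2 * s - 1)) by apply Rpower_gt0.
  assert (0 < exp (- (c * eps j ^ 2))) by apply exp_pos.
  assert (exp (- (c * eps j ^ 2)) <= exp 0)
    by (apply exp_le_exp; assert (0 <= eps j ^ 2) by (apply pow_le; lra); nra).
  rewrite exp_0 in *.
  rewrite <- (Rpower_succ (eps j) (2 * s)) by lra.
  assert (Rpower (eps j) (2 * s - 1) * exp (- (c * eps j ^ 2)) <= Rpower (eps j) (2 * s - 1))
    by nra.
  assert (0 < Rpower (eps j) (2 * s - 1) * exp (- (c * eps j ^ 2)))
    by (apply Rmult_lt_0_compat; assumption).
  split; [apply Rmult_le_pos|apply Rmult_le_compat_l]; lra.
Qed.

Lemma gauss_power_riemann_lim s c (eps : nat -> R) : 0 < s -> 0 < c ->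
  (forall j, 0 < eps j) -> is_lim_seq eps 0 ->
  is_lim_seq (fun j => eps j * Series (fun k => gauss_power s c (INR (S k) * eps j)))
    (Gamma s / (2 * Rpower c s)).
Proof.
  intros Hs Hc Heps Heps0.
  apply (riemann_series_lim _ _ (gauss_power_unimodal s c Hc)); auto.
  - apply gauss_power_is_RInt_0_infty; auto.
  - apply is_lim_seq_mesh_gauss_power; auto.
Qed.

Lemma gauss_power_series_asymptotics B n s c K (u : nat -> nat -> R) :
  1 < B -> 0 < s -> 0 < c ->
  (forall j k, u j k =
     K * Rpower (Rpower B (INR j)) n * gauss_power s c (INR (S k) / Rpower B (INR j))) ->
  (forall j, ex_series (u j)) /\
  is_lim_seq (fun j =>
     (Series (u j) - Rpower B ((n + 1) * INR j) * (K * (Gamma s / (2 * Rpower c s))))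
     / Rpower B ((n + 1) * INR j)) 0.
Proof.
  intros HB Hs Hc Hu.
  assert (HE : forall j, 0 < Rpower B (INR j)) by (intro; apply Rpower_gt0).
  assert (Heps : forall j, 0 < / Rpower B (INR j)) by (intro; apply Rinv_0_lt_compat, HE).
  split.
  - intro j; apply (ex_series_ext _ _ (fun k => eq_sym (Hu j k))).
    exact (ex_series_scal_l (K * Rpower (Rpower B (INR j)) n) _
             (ex_series_gauss_power s c _ Hs Hc (Heps j))).
  - assert (Hlim := gauss_power_riemann_lim s c _ Hs Hc Heps (is_lim_seq_inv_Rpower_nat B HB)).
    set (I := Gamma s / (2 * Rpower c s)) in *.
    replace (Finite 0) with (Finite (K * I - K * I)) by (f_equal; ring).
    apply is_lim_seq_ext with (fun j => K * (/ Rpower B (INR j) *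
       Series (fun k => gauss_power s c (INR (S k) * / Rpower B (INR j)))) - K * I).
    2:{ apply is_lim_seq_minus'; [apply (is_lim_seq_scal_l _ K I Hlim)|apply is_lim_seq_const]. }
    intro j; rewrite (Series_ext _ _ (Hu j)), Series_scal_l.
    replace (Rpower B ((n + 1) * INR j))
      with (Rpower (Rpower B (INR j)) n * Rpower B (INR j))
      by (rewrite Rpower_mult, <- Rpower_plus; f_equal; ring).
    assert (0 < Rpower (Rpower B (INR j)) n) by apply Rpower_gt0.
    specialize (HE j); unfold Rdiv; field; lra.
Qed.

Lemma fpa_Rpower_gauss_power p a n x : 0 < x ->
  fpa p a x * Rpower x n = gauss_power (a * p + (n + 1) / 2) a x.
Proof.
  intros Hx; unfold fpa, fp, gauss_power, Rpower.
  rewrite ln_mult, !ln_exp by apply exp_pos.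
  rewrite <- !exp_plus; f_equal; field.
Qed.

Lemma fpa2_Rpower_gauss_power p a1 a2 n x D : 0 < x -> 0 < D ->
  fpa p a1 x * fpa p a2 (x / D) * Rpower x n =
  Rpower D (- (2 * a2 * p)) * gauss_power ((a1 + a2) * p + (n + 1) / 2) (a1 + a2 / D ^ 2) x.
Proof.
  intros Hx HD; unfold fpa, fp, gauss_power, Rpower.
  rewrite !ln_mult, !ln_exp, ln_div by (try apply exp_pos; auto).
  rewrite <- !exp_plus; f_equal; field; lra.
Qed.

Lemma fpa_sample_eq p a n E l : 0 < l -> 0 < E ->
  fpa p a (l / E) * Rpower l n = Rpower E n * gauss_power (a * p + (n + 1) / 2) a (l / E).
Proof.
  intros Hl HE; rewrite (Rpower_div_scale l E n), <- fpa_Rpower_gauss_power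
    by (try apply Rdiv_lt_0_compat; auto); ring.
Qed.

Lemma fpa2_sample_eq p a1 a2 n E D l : 0 < l -> 0 < E -> 0 < D ->
  fpa p a1 (l / E) * fpa p a2 (l / (E * D)) * Rpower l n =
  Rpower D (- (2 * a2 * p)) * Rpower E n *
  gauss_power ((a1 + a2) * p + (n + 1) / 2) (a1 + a2 / D ^ 2) (l / E).
Proof.
  intros Hl HE HD; rewrite (Rpower_div_scale l E n) by auto.
  replace (l / (E * D)) with (l / E / D) by (field; lra).
  transitivity (Rpower E n * (fpa p a1 (l / E) * fpa p a2 (l / E / D) * Rpower (l / E) n));
    [ring|].
  rewrite fpa2_Rpower_gauss_power by (try apply Rdiv_lt_0_compat; auto); ring.
Qed.

(* [a1 B^dj + a2 B^-dj = B^dj c] with [c = a1 + a2 B^(-2 dj)]. *)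
Lemma tau_eq B n p a1 a2 dj : 0 < a1 -> 0 < a2 ->
  tau B n p a1 a2 dj =
  Rpower (Rpower B (IZR dj)) (- (2 * a2 * p)) * Rpower (a1 + a2) ((a1 + a2) * p + (n + 1) / 2)
  / Rpower (a1 + a2 / Rpower B (IZR dj) ^ 2) ((a1 + a2) * p + (n + 1) / 2).
Proof.
  intros H1 H2; unfold tau; rewrite (Rpower_Ropp B (IZR dj)), <- Rpower_mult.
  set (D := Rpower B (IZR dj)); assert (HD : 0 < D) by apply Rpower_gt0.
  assert (0 < a2 / D ^ 2) by (apply Rdiv_lt_0_compat; auto; apply pow_lt; auto).
  replace (a1 * D + a2 * / D) with (D * (a1 + a2 / D ^ 2)) by (field; lra).
  unfold Rpower; rewrite ln_div, ln_mult by (try apply Rmult_lt_0_compat; lra).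
  unfold Rdiv; rewrite <- exp_Ropp, <- !exp_plus; f_equal; field.
Qed.

Theorem lemma19 (B p n : R) (HB : 1 < B) (Hp : 0 < p) :
  (forall a : R, 0 < a -> 2 * a * p + n > -1 ->
     (forall j : nat,
        ex_series (fun k : nat =>
          fpa p a (INR (k + 1) / Rpower B (INR j)) * Rpower (INR (k + 1)) n)) /\
     is_lim_seq (fun j : nat =>
        (Series (fun k : nat =>
            fpa p a (INR (k + 1) / Rpower B (INR j)) * Rpower (INR (k + 1)) n)
         - Rpower B ((n + 1) * INR j)
           / (2 * Rpower a (a * p + (n + 1) / 2))
           * Gamma (a * p + (n + 1) / 2))
        / Rpower B ((n + 1) * INR j)) 0) /\
  (forall (a1 a2 : R) (dj : Z), 0 < a1 -> 0 < a2 ->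
     2 * (a1 + a2) * p + n > -1 ->
     (forall j : nat,
        ex_series (fun k : nat =>
          fpa p a1 (INR (k + 1) / Rpower B (INR j))
          * fpa p a2 (INR (k + 1) / Rpower B (INR j + IZR dj))
          * Rpower (INR (k + 1)) n)) /\
     is_lim_seq (fun j : nat =>
        (Series (fun k : nat =>
            fpa p a1 (INR (k + 1) / Rpower B (INR j))
            * fpa p a2 (INR (k + 1) / Rpower B (INR j + IZR dj))
            * Rpower (INR (k + 1)) n)
         - Rpower B ((n + 1) * INR j) * tau B n p a1 a2 dj
           / (2 * Rpower (a1 + a2) ((a1 + a2) * p + (n + 1) / 2))
           * Gamma ((a1 + a2) * p + (n + 1) / 2))
        / Rpower B ((n + 1) * INR j)) 0).
Proof.
  assert (HE : forall j, 0 < Rpower B (INR j)) by (intro; apply Rpower_gt0).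
  assert (Hl : forall k, 0 < INR (k + 1)) by (intro; apply lt_0_INR; lia).
  split.
  - intros a Ha Hn.
    destruct (gauss_power_series_asymptotics B n (a * p + (n + 1) / 2) a 1
      (fun j k => fpa p a (INR (k + 1) / Rpower B (INR j)) * Rpower (INR (k + 1)) n))
      as [Hex Hlim]; auto; try lra.
    { intros j k; rewrite fpa_sample_eq, Nat.add_1_r by auto; ring. }
    split; auto.
    eapply is_lim_seq_ext; [|exact Hlim]; intro j; cbv beta.
    unfold Rdiv; ring.
  - intros a1 a2 dj H1 H2 Hn.
    set (D := Rpower B (IZR dj)); assert (HD : 0 < D) by apply Rpower_gt0.
    destruct (gauss_power_series_asymptotics B n ((a1 + a2) * p + (n + 1) / 2)
      (a1 + a2 / D ^ 2) (Rpower D (- (2 * a2 * p)))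
      (fun j k => fpa p a1 (INR (k + 1) / Rpower B (INR j))
          * fpa p a2 (INR (k + 1) / Rpower B (INR j + IZR dj))
          * Rpower (INR (k + 1)) n)) as [Hex Hlim]; auto; try lra.
    { assert (0 < a2 / D ^ 2) by (apply Rdiv_lt_0_compat; auto; apply pow_lt; auto); lra. }
    { intros j k; rewrite Rpower_plus, fpa2_sample_eq, Nat.add_1_r by auto; reflexivity. }
    split; auto.
    eapply is_lim_seq_ext; [|exact Hlim]; intro j; cbv beta.
    rewrite tau_eq by auto; fold D.
    assert (0 < Rpower (a1 + a2) ((a1 + a2) * p + (n + 1) / 2)) by apply Rpower_gt0.
    assert (0 < Rpower (a1 + a2 / D ^ 2) ((a1 + a2) * p + (n + 1) / 2)) by apply Rpower_gt0.
    assert (0 < Rpower B ((n + 1) * INR j)) by apply Rpower_gt0.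
    field; lra.
Qed.
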